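(* Consider the heterogeneous subgradient algorithm as in the setting below. Suppose $\{\mathbb G(t)\}$ is uniformly strongly connected by sub-sequences of length $L$ and $\|g_i(t)\|\le G$ for all $i,t$, for some $G>0$. Let $\eta,\mu$ be constants as described below. Then for all $t\ge0$ and $i\in\mathcal V$, $$\Big\|z_i(t+1)-\frac1n\sum_{k=1}^nx_k(t)\Big\|\le\frac8\eta\mu^t\sum_{k=1}^n\|x_k(0)\|+\frac{8nG}{\eta\mu}\sum_{s=0}^t\mu^{t-s}\alpha(s).$$ If in addition $\{\alpha(t)\}$ is positive, non-increasing, with $\sum_t\alpha(t)=\infty$ and $\sum_t\alpha^2(t)<\infty$, then for all $t\ge0$ and $i\in\mathcal V$, $$\Big\|z_i(t+1)-\frac1n\sum_{k=1}^nx_k(t)\Big\|\le\frac8\eta\mu^t\sum_{k=1}^n\|x_k(0)\|+\frac{8nG}{\eta\mu(1-\mu)}\big(\alpha(0)\mu^{t/2}+\alpha(\lceil t/2\rceil)\big).$$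
   Context: Setting. Fix $n$ agents, $\mathcal V=\{1,\dots,n\}$. For each $t\in\{0,1,2,\dots\}$, $\mathbb G(t)=(\mathcal V,\mathcal E(t))$ is a directed graph containing a self-arc $(i,i)$ at every vertex; $\mathcal N_i(t)=\{j:(j,i)\in\mathcal E(t)\}$ and $\mathcal N_i^-(t)=\{k:(i,k)\in\mathcal E(t)\}$. Weights $w_{ij}(t)$ are positive for $j\in\mathcal N_i(t)$ and $w_{ij}(t)=0$ otherwise, and satisfy: there is $\beta>0$ with $w_{ij}(t)\ge\beta$ whenever $j\in\mathcal N_i(t)$, and $\sum_{j\in\mathcal N_i^-(t)}w_{ji}(t)=1$ for all $i,t$. Write $\Phi_W(t,\tau)=W(t-1)\cdots W(\tau)$ for $t>\tau$, where $W(t)=[w_{ij}(t)]$. Uniformly strongly connected by sub-sequences of length $L$: for every $t\ge0$ the graph with vertex set $\mathcal V$ and edge set $\bigcup_{k=t}^{t+L-1}\mathcal E(k)$ is strongly connected. Heterogeneous subgradient algorithm: each agent $i$ has a convex $f_i:\mathbb R^d\to\mathbb R$ and an arbitrary switching signal $\sigma_i(t)\in\{0,1\}$. With stepsizes $\alpha(t)>0$: $x_i(t+1)=\sum_{j\in\mathcal N_i(t)}w_{ij}(t)[x_j(t)-\alpha(t)g_j(t)\sigma_j(t)]-\alpha(t)g_i(t)(1-\sigma_i(t))$, $x_i(0)\in\mathbb R^d$; $y_i(t+1)=\sum_{j\in\mathcal N_i(t)}w_{ij}(t)y_j(t)$, $y_i(0)=1$; $z_i(t)=x_i(t)/y_i(t)$;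 $g_i(t)$ is a subgradient of $f_i$ at $z_i(t)$. (All $\sigma_i\equiv1$ gives subgradient-push; all $\sigma_i\equiv0$ gives push-subgradient.) Constants: $\eta>0$ is any constant with $y_i(t)\ge\eta$ for all $i,t$ (e.g. $\eta=n^{-nL}$); $\mu\in(0,1)$ is any constant for which there exist stochastic vectors $\phi(t)\in\mathbb R^n$ with $|[\Phi_W(t+1,s)]_{ij}-\phi_i(t)|\le4\mu^{t-s}$ for all $i,j\in\mathcal V$, $t\ge s\ge0$ (e.g. $\mu=(1-n^{-nL})^{1/L}$). *)

From HB Require Import structures.
From mathcomp Require Import all_boot all_order all_algebra.
From mathcomp Require Import all_classical all_reals all_analysis.
Set Implicit Arguments. Unset Strict Implicit. Unset Printing Implicit Defensive.
Import Order.TTheory GRing.Theory Num.Theory.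
Local Open Scope ring_scope.

Definition dotv {R : realType} {d : nat} (u v : 'rV[R]_d) : R :=
  \sum_(k < d) u 0 k * v 0 k.
Definition enorm {R : realType} {d : nat} (v : 'rV[R]_d) : R :=
  Num.sqrt (\sum_(k < d) v 0 k ^+ 2).

Definition convex_fun {R : realType} {d : nat} (f : 'rV[R]_d -> R) : Prop :=
  forall (x y : 'rV[R]_d) (l : R), 0 <= l <= 1 ->
    f (l *: x + (1 - l) *: y) <= l * f x + (1 - l) * f y.

Definition is_subgradient {R : realType} {d : nat} (f : 'rV[R]_d -> R)
  (z g : 'rV[R]_d) : Prop :=
  forall y, f z + dotv g (y - z) <= f y.

(* phiW W s k = W(s+k-1) ... W(s)  (k factors);
   hence Phi_W(t, tau) = phiW W tau (t - tau) for t > tau. *)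
Fixpoint phiW {R : realType} {n : nat} (W : nat -> 'M[R]_n) (s k : nat)
  : 'M[R]_n :=
  match k with
  | 0 => 1%:M
  | k'.+1 => W (s + k')%N *m phiW W s k'
  end.

Definition Phi_W {R : realType} {n : nat} (W : nat -> 'M[R]_n) (t tau : nat)
  : 'M[R]_n := phiW W tau (t - tau).

(* E t j i  means the arc (j,i) belongs to E(t). Strong connectivity of the
   union graph over the window [t, t+L-1]. *)
Definition USC {n : nat} (E : nat -> rel 'I_n) (L : nat) : Prop :=
  forall t : nat, forall u v : 'I_n,
    connect (fun a b => [exists k : 'I_L, E (t + k)%N a b]) u v.

(* Writing p_j(t) = -alpha(t) sigma_j(t) g_j(t) for the part of the step
   that is mixed and q_i(t) = -alpha(t) (1 - sigma_i(t)) g_i(t) for the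
   part applied locally, the iteration is a perturbed push-sum recursion
     x(t+1) = W(t) (x(t) + p(t)) + q(t),      y(t+1) = W(t) y(t),
   with column-stochastic W(t).  By variation of constants, x(t+1) is
   Phi(t+1,0) x(0) plus the perturbations propagated by Phi(t+1,s), while
   the total mass sum_k x_k(t) only changes by the perturbations.  Since
   the rows of Phi(t+1,s) are within 4 mu^(t-s) of a stochastic vector,
   every term of x_i(t+1) - y_i(t+1) * avg x(t) is bounded by a
   geometrically discounted sum of the perturbation sizes (at most
   n G alpha(s)); dividing by y_i(t+1) >= eta gives the first estimate.
   For non-increasing steps, splitting the discounted sum at uphalf t
   gives the second one. *)

From HB Require Import structures.
From mathcomp Require Import all_boot all_order all_algebra.
From mathcomp Require Import all_classical all_reals all_analysis.
From mathcomp Require Import ring lra zify.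
Import Order.TTheory GRing.Theory Num.Theory.
Local Open Scope classical_set_scope.
Local Open Scope ring_scope.

Section EuclideanNorm.
Context {R : realType} {d : nat}.
Implicit Types u v : 'rV[R]_d.

Lemma enorm_ge0 v : 0 <= enorm v.
Proof. exact: sqrtr_ge0. Qed.

Lemma sumsq_ge0 v : 0 <= \sum_(k < d) v 0 k ^+ 2.
Proof. by apply: sumr_ge0 => k _; exact: sqr_ge0. Qed.

Lemma sqr_enorm v : enorm v ^+ 2 = \sum_(k < d) v 0 k ^+ 2.
Proof. by rewrite sqr_sqrtr // sumsq_ge0. Qed.

Lemma enormZ (c : R) v : enorm (c *: v) = `|c| * enorm v.
Proof.
rewrite /enorm -sqrtr_sqr -sqrtrM ?sqr_ge0 // mulr_sumr.
by congr Num.sqrt; apply: eq_bigr => k _; rewrite mxE exprMn.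
Qed.

Lemma enormN v : enorm (- v) = enorm v.
Proof. by rewrite -scaleN1r enormZ normrN normr1 mul1r. Qed.

Lemma enorm_eq0 v : enorm v = 0 -> forall k, v 0 k = 0.
Proof.
move=> /(congr1 (fun r => r ^+ 2)); rewrite sqr_enorm expr0n /= => /eqP.
rewrite psumr_eq0; last by move=> k _; exact: sqr_ge0.
by move=> /allP H k; apply/eqP; rewrite -sqrf_eq0; exact: H (mem_index_enum _).
Qed.

(* Cauchy-Schwarz: expand 0 <= sum_k (|v| u_k - |u| v_k)^2. *)
Lemma dotv_le u v : dotv u v <= enorm u * enorm v.
Proof.
set a := enorm u; set b := enorm v.
have a0 : 0 <= a := enorm_ge0 u; have b0 : 0 <= b := enorm_ge0 v.
have expand : \sum_(k < d) (b * u 0 k - a * v 0 k) ^+ 2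
    = 2 * (a * b) * (a * b - dotv u v).
  rewrite (eq_bigr (fun k => b ^+ 2 * u 0 k ^+ 2
      - 2 * (a * b) * (u 0 k * v 0 k) + a ^+ 2 * v 0 k ^+ 2)); last by move=> k _; ring.
  rewrite big_split sumrB /= -!mulr_sumr -!sqr_enorm -/a -/b /dotv; ring.
have := sumsq_ge0 (b *: u - a *: v).
rewrite (eq_bigr (fun k => (b * u 0 k - a * v 0 k) ^+ 2)); last by move=> k _; rewrite !mxE.
rewrite expand.
have [ab0|ab0] := eqVneq (a * b) 0.
  move: ab0 => /eqP; rewrite mulf_eq0 => /orP [] /eqP H.
  - by rewrite /dotv big1 ?H ?mul0r // => k _; rewrite (enorm_eq0 _ H) mul0r.
  - by rewrite /dotv big1 ?H ?mulr0 // => k _; rewrite (enorm_eq0 _ H) mulr0.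
by rewrite pmulr_rge0 ?subr_ge0 // mulr_gt0 // lt_def ab0 mulr_ge0.
Qed.

Lemma enormD u v : enorm (u + v) <= enorm u + enorm v.
Proof.
have a0 := enorm_ge0 u; have b0 := enorm_ge0 v; have cs := dotv_le u v.
rewrite -(ger0_norm (addr_ge0 a0 b0)) -sqrtr_sqr; apply: ler_wsqrtr.
have -> : \sum_(k < d) (u + v) 0 k ^+ 2 =
    \sum_(k < d) u 0 k ^+ 2 + 2 * dotv u v + \sum_(k < d) v 0 k ^+ 2.
  rewrite /dotv mulr_sumr -!big_split /=; apply: eq_bigr => k _; rewrite mxE; ring.
rewrite -!sqr_enorm; nra.
Qed.

Lemma enormB u v : enorm (u - v) <= enorm u + enorm v.
Proof. by rewrite -(enormN v); exact: enormD. Qed.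

Lemma enorm_sum (I : Type) (r : seq I) (P : pred I) (F : I -> 'rV[R]_d) :
  enorm (\sum_(i <- r | P i) F i) <= \sum_(i <- r | P i) enorm (F i).
Proof.
elim/big_rec2: _ => [|i a b _ IH].
  by rewrite /enorm big1 ?sqrtr0 // => k _; rewrite mxE expr0n.
exact: le_trans (enormD _ _) (lerD (lexx _) IH).
Qed.

End EuclideanNorm.

Section MatrixAction.
Context {R : realType} {n d : nat}.
Implicit Types (M : 'M[R]_n) (v w : 'I_n -> 'rV[R]_d).

Definition mxact M v (i : 'I_n) : 'rV[R]_d := \sum_j M i j *: v j.

Lemma mxactM (A B : 'M[R]_n) v i : mxact (A *m B) v i = mxact A (mxact B v) i.
Proof.
rewrite /mxact; under eq_bigr do rewrite mxE scaler_suml.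
rewrite exchange_big /=; apply: eq_bigr => k _.
by rewrite scaler_sumr; apply: eq_bigr => j _; rewrite scalerA.
Qed.

Lemma mxact1 v i : mxact 1%:M v i = v i.
Proof.
rewrite /mxact (bigD1 i) //= big1 ?addr0; first by rewrite mxE eqxx scale1r.
by move=> j /negbTE ji; rewrite mxE eq_sym ji scale0r.
Qed.

Lemma mxactD M v w i : mxact M (fun j => v j + w j) i = mxact M v i + mxact M w i.
Proof. by rewrite /mxact -big_split; apply: eq_bigr => j _; rewrite scalerDr. Qed.

Lemma mxact_sum M (m : nat) (v : 'I_m -> 'I_n -> 'rV[R]_d) i :
  mxact M (fun j => \sum_(s < m) v s j) i = \sum_(s < m) mxact M (v s) i.
Proof. by rewrite /mxact exchange_big /=; apply: eq_bigr => j _; rewrite scaler_sumr. Qed.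

Definition mxerr M (ph : R) v (i : 'I_n) : 'rV[R]_d := \sum_j (M i j - ph) *: v j.

Lemma mxact_err M ph v i : mxact M v i = ph *: \sum_j v j + mxerr M ph v i.
Proof.
rewrite /mxact /mxerr scaler_sumr -big_split /=; apply: eq_bigr => j _.
by rewrite -scalerDl addrC subrK.
Qed.

Definition sum_enorm v : R := \sum_j enorm (v j).

Lemma sum_enorm_ge0 v : 0 <= sum_enorm v.
Proof. by apply: sumr_ge0 => j _; exact: enorm_ge0. Qed.

Lemma mxerr_le M ph v i (c : R) : (forall j, `|M i j - ph| <= c) ->
  enorm (mxerr M ph v i) <= c * sum_enorm v.
Proof.
move=> H; apply: le_trans (enorm_sum _ _ _ _) _.
rewrite mulr_sumr; apply: ler_sum => j _; rewrite enormZ.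
by apply: ler_wpM2r; [exact: enorm_ge0 | exact: H].
Qed.

Lemma Phi_W_refl (W : nat -> 'M[R]_n) t : Phi_W W t t = 1%:M.
Proof. by rewrite /Phi_W subnn. Qed.

Lemma Phi_W_S (W : nat -> 'M[R]_n) t s : (s <= t)%N ->
  Phi_W W t.+1 s = W t *m Phi_W W t s.
Proof. by move=> st; rewrite /Phi_W subSn //= subnKC. Qed.

End MatrixAction.

Section PerturbedPushSum.
Context {R : realType} {n d : nat} {W : nat -> 'M[R]_n}.
Context {X P Q : nat -> 'I_n -> 'rV[R]_d} {Y : nat -> 'I_n -> R}.
Hypothesis W_col : forall t j, \sum_i W t i j = 1.
Hypothesis X_rec : forall t i,
  X t.+1 i = mxact (W t) (fun j => X t j + P t j) i + Q t i.
Hypothesis Y_init : forall i, Y 0%N i = 1.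
Hypothesis Y_rec : forall t i, Y t.+1 i = \sum_j W t i j * Y t j.

Lemma X_closed t i : X t i = mxact (Phi_W W t 0) (X 0%N) i
  + \sum_(s < t) mxact (Phi_W W t s) (P s) i
  + \sum_(s < t) mxact (Phi_W W t s.+1) (Q s) i.
Proof.
elim: t i => [|t IH] i; first by rewrite !big_ord0 !addr0 Phi_W_refl mxact1.
rewrite X_rec; have -> : X t = fun j => mxact (Phi_W W t 0) (X 0%N) j
  + \sum_(s < t) mxact (Phi_W W t s) (P s) j
  + \sum_(s < t) mxact (Phi_W W t s.+1) (Q s) j by apply: funext => j; exact: IH.
rewrite !mxactD (mxact_sum _ _ (fun s : 'I_t => mxact (Phi_W W t s) (P s)))
  (mxact_sum _ _ (fun s : 'I_t => mxact (Phi_W W t s.+1) (Q s))) -mxactM -Phi_W_S //.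
rewrite !big_ord_recr /= Phi_W_refl mxact1 (Phi_W_S _ _ _ (leqnn t)) Phi_W_refl mulmx1.
under eq_bigr do rewrite -mxactM -Phi_W_S 1?ltnW //.
under [X in _ + _ + X + _ + _ = _]eq_bigr do rewrite -mxactM -Phi_W_S //.
rewrite -!addrA; congr (_ + _); congr (_ + _); exact: addrCA.
Qed.

(* Column stochasticity conserves the total mass, up to the perturbations. *)
Lemma X_sum t : \sum_i X t i =
  \sum_i X 0%N i + \sum_(s < t) (\sum_j P s j + \sum_j Q s j).
Proof.
elim: t => [|t IH]; first by rewrite big_ord0 addr0.
rewrite big_ord_recr /= addrA -IH.
under eq_bigr do rewrite X_rec.
rewrite big_split /= /mxact exchange_big /=.
under eq_bigr do rewrite -scaler_suml W_col scale1r.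
by rewrite big_split /= addrA.
Qed.

Lemma Y_closed t i : Y t i = \sum_j Phi_W W t 0 i j.
Proof.
elim: t i => [|t IH] i.
  rewrite Y_init Phi_W_refl (bigD1 i) //= big1 ?addr0; first by rewrite mxE eqxx.
  by move=> j /negbTE ji; rewrite mxE eq_sym ji.
rewrite Y_rec Phi_W_S //; under eq_bigr do rewrite IH mulr_sumr.
by rewrite exchange_big /=; apply: eq_bigr => k _; rewrite mxE.
Qed.

Lemma deviation_split t i (ph : R) : (0 < n)%N ->
  X t.+1 i - Y t.+1 i *: ((n%:R)^-1 *: \sum_k X t k) =
    mxerr (Phi_W W t.+1 0) ph (X 0%N) i
    - ((\sum_j (Phi_W W t.+1 0 i j - ph)) / n%:R) *: \sum_k X t k
    + \sum_(s < t) (mxerr (Phi_W W t.+1 s) ph (P s) i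
                    + mxerr (Phi_W W t.+1 s.+1) ph (Q s) i)
    + (ph *: \sum_j P t j + mxerr (Phi_W W t.+1 t) ph (P t) i + Q t i).
Proof.
move=> n_gt0; set c := \sum_j (_ - ph); set S := \sum_k X t k.
have -> : Y t.+1 i *: ((n%:R)^-1 *: S) = (ph + c / n%:R) *: S.
  rewrite scalerA Y_closed /c sumrB sumr_const card_ord -mulr_natr; congr (_ *: _).
  by field; rewrite pnatr_eq0 -lt0n.
rewrite X_closed /S X_sum !big_ord_recr /= Phi_W_refl mxact1.
rewrite (mxact_err (Phi_W W t.+1 0) ph) (mxact_err (Phi_W W t.+1 t) ph).
under eq_bigr do rewrite (mxact_err _ ph).
under [X in _ + (X + _) - _ = _]eq_bigr do rewrite (mxact_err _ ph).
rewrite !big_split /= -!scaler_sumr.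
by apply/rowP => k; rewrite !mxE; ring.
Qed.

Lemma sum_state_le t : enorm (\sum_k X t k) <=
  sum_enorm (X 0%N) + \sum_(s < t) (sum_enorm (P s) + sum_enorm (Q s)).
Proof.
rewrite X_sum; apply: le_trans (enormD _ _) _; apply: lerD; first exact: enorm_sum.
apply: le_trans (enorm_sum _ _ _ _) _; apply: ler_sum => s _.
by apply: le_trans (enormD _ _) _; apply: lerD; exact: enorm_sum.
Qed.

Section DeviationBound.
Variables (t : nat) (i : 'I_n) (phi : 'I_n -> R) (mu : R).
Hypothesis n_gt0 : (0 < n)%N.
Hypothesis mu_gt0 : 0 < mu.
Hypothesis mu_le1 : mu <= 1.
Hypothesis phi_ge0 : forall k, 0 <= phi k.
Hypothesis phi_sum1 : \sum_k phi k = 1.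
Hypothesis Phi_W_close : forall j s, (s <= t)%N ->
  `|Phi_W W t.+1 s i j - phi i| <= 4 * mu ^+ (t - s).

Lemma avg_weight_le : `|(\sum_j (Phi_W W t.+1 0 i j - phi i)) / n%:R| <= 4 * mu ^+ t.
Proof.
have n_pos : (0 : R) < n%:R by rewrite ltr0n.
rewrite normrM normfV normr_nat ler_pdivrMr //.
apply: le_trans (ler_norm_sum _ _ _) _.
apply: le_trans (ler_sum _ (fun j _ => Phi_W_close j _ (leq0n t))) _.
by rewrite subn0 sumr_const card_ord mulr_natr.
Qed.

(* The contribution of the last perturbation, which Phi(t+1, t) = W(t)
   and the identity carry without contraction. *)
Lemma last_step_le : enorm (phi i *: \sum_j P t j
    + mxerr (Phi_W W t.+1 t) (phi i) (P t) i + Q t i)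
  <= 5 * (sum_enorm (P t) + sum_enorm (Q t)).
Proof.
have phi_le1 : phi i <= 1.
  by rewrite -phi_sum1 (bigD1 i) //= lerDl; apply: sumr_ge0 => k _.
have hP : enorm (phi i *: \sum_j P t j) <= sum_enorm (P t).
  rewrite enormZ ger0_norm // -[leRHS]mul1r.
  by apply: ler_pM => //; [exact: enorm_ge0 | exact: enorm_sum].
have hE : enorm (mxerr (Phi_W W t.+1 t) (phi i) (P t) i)
    <= 4 * mu ^+ (t - t) * sum_enorm (P t).
  by apply: mxerr_le => j; exact: Phi_W_close.
rewrite subnn expr0 mulr1 in hE.
have hQ : enorm (Q t i) <= sum_enorm (Q t).
  by rewrite /sum_enorm (bigD1 i) //= lerDl; apply: sumr_ge0 => j _; exact: enorm_ge0.
have := sum_enorm_ge0 (Q t).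
have := le_trans (enormD _ _) (lerD (le_trans (enormD _ _) (lerD hP hE)) hQ).
lra.
Qed.

Let w s := mu ^+ (t - s) / mu.

Let w_ge0 s : 0 <= w s.
Proof. by apply: divr_ge0; [exact/exprn_ge0/ltW | exact: ltW]. Qed.

Let w_succ s : (s < t)%N -> mu ^+ (t - s.+1) = w s.
Proof. by move=> st; rewrite /w -(subnSK st) exprS mulrC mulKf // gt_eqF. Qed.

Let w_ge s : (s <= t)%N -> mu ^+ t <= w s /\ mu ^+ (t - s) <= w s.
Proof.
move=> st; have mu_pow_le : mu ^+ t <= mu ^+ (t - s).
  by apply: ler_wiXn2l; [exact: ltW | exact: mu_le1 | exact: leq_subr].
have pow_le_w : mu ^+ (t - s) <= w s.
  by rewrite /w ler_pdivlMr // ler_piMr //; exact/exprn_ge0/ltW.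
by split=> //; exact: le_trans pow_le_w.
Qed.

Lemma propagated_le : enorm (\sum_(s < t) (mxerr (Phi_W W t.+1 s) (phi i) (P s) i
                                  + mxerr (Phi_W W t.+1 s.+1) (phi i) (Q s) i))
  <= \sum_(s < t) 4 * w s * (sum_enorm (P s) + sum_enorm (Q s)).
Proof.
apply: le_trans (enorm_sum _ _ _ _) _; apply: ler_sum => s _.
apply: le_trans (enormD _ _) _; rewrite mulrDr; apply: lerD; apply: mxerr_le => j.
  apply: le_trans (Phi_W_close _ _ (ltnW (ltn_ord s))) _.
  by rewrite ler_pM2l //; case: (w_ge _ (ltnW (ltn_ord s))).
by rewrite -w_succ //; exact: Phi_W_close.
Qed.

Lemma discounted_collect (p a : nat -> R) :
  (forall s, 0 <= p s) -> (forall s, p s <= a s) ->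
  4 * mu ^+ t * \sum_(s < t) p s + \sum_(s < t) 4 * w s * p s + 5 * p t
  <= 8 / mu * \sum_(0 <= s < t.+1) mu ^+ (t - s) * a s.
Proof.
move=> p_ge0 p_le; rewrite big_mkord big_ord_recr /= subnn expr0 mul1r mulrDr.
apply: lerD.
  rewrite mulr_sumr -big_split mulr_sumr; apply: ler_sum => s _ /=.
  have [mut_le _] := w_ge _ (ltnW (ltn_ord s)).
  have -> : 8 / mu * (mu ^+ (t - s) * a s) = 8 * w s * a s.
    by rewrite /w; field; exact: lt0r_neq0.
  have h1 : 0 <= (w s - mu ^+ t) * p s by apply: mulr_ge0; rewrite ?subr_ge0.
  have h2 : 0 <= w s * (a s - p s).
    by apply: mulr_ge0; [exact: w_ge0 | rewrite subr_ge0].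
  nra.
have inv_ge1 : 1 <= mu^-1 by rewrite invf_ge1.
have h : 0 <= (mu^-1 - 1) * a t.
  by apply: mulr_ge0; [rewrite subr_ge0 | exact: le_trans (p_ge0 t) (p_le t)].
have := p_le t; have := p_ge0 t; lra.
Qed.

Lemma deviation_le (a : nat -> R) :
  (forall s, sum_enorm (P s) + sum_enorm (Q s) <= a s) ->
  enorm (X t.+1 i - Y t.+1 i *: ((n%:R)^-1 *: \sum_k X t k))
  <= 8 * mu ^+ t * sum_enorm (X 0%N)
     + 8 / mu * \sum_(0 <= s < t.+1) mu ^+ (t - s) * a s.
Proof.
move=> pert_le; pose p s := sum_enorm (P s) + sum_enorm (Q s).
have p_ge0 s : 0 <= p s by apply: addr_ge0; exact: sum_enorm_ge0.
rewrite (deviation_split _ _ (phi i) n_gt0).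
have init_le : enorm (mxerr (Phi_W W t.+1 0) (phi i) (X 0%N) i)
    <= 4 * mu ^+ t * sum_enorm (X 0%N).
  by apply: mxerr_le => j; rewrite -[t in mu ^+ t]subn0; exact: Phi_W_close.
have avg_le : enorm ((\sum_j (Phi_W W t.+1 0 i j - phi i)) / n%:R *: \sum_k X t k)
    <= 4 * mu ^+ t * sum_enorm (X 0%N) + 4 * mu ^+ t * \sum_(s < t) p s.
  rewrite enormZ -mulrDr; apply: ler_pM; rewrite ?enorm_ge0 //.
    exact: avg_weight_le.
  exact: sum_state_le.
have collect := discounted_collect _ _ p_ge0 pert_le.
have := propagated_le; have := last_step_le; rewrite -/(p t) => last prop.
apply: le_trans (enormD _ _) _; apply: le_trans (lerD (enormD _ _) (lexx _)) _.
apply: le_trans (lerD (lerD (enormB _ _) (lexx _)) (lexx _)) _.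
lra.
Qed.

Lemma normalized_deviation_le (a : nat -> R) (eta : R) :
  0 < eta -> eta <= Y t.+1 i ->
  (forall s, sum_enorm (P s) + sum_enorm (Q s) <= a s) ->
  enorm ((Y t.+1 i)^-1 *: X t.+1 i - (n%:R)^-1 *: \sum_k X t k)
  <= 8 / eta * mu ^+ t * sum_enorm (X 0%N)
     + 8 / (eta * mu) * \sum_(0 <= s < t.+1) mu ^+ (t - s) * a s.
Proof.
move=> eta_gt0 eta_le pert_le; have Y_gt0 := lt_le_trans eta_gt0 eta_le.
rewrite -[X in _ - X](scalerK (lt0r_neq0 Y_gt0)) -scalerBr enormZ gtr0_norm ?invr_gt0 //.
have dev := deviation_le a pert_le.
apply: le_trans (ler_wpM2l _ dev) _; first by rewrite invr_ge0; exact: ltW.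
have inv_le : (Y t.+1 i)^-1 <= eta^-1 by rewrite lef_pV2 ?posrE.
apply: le_trans (ler_wpM2r (le_trans (enorm_ge0 _) dev) inv_le) _.
by rewrite mulrDr invfM !mulrA [eta^-1 * 8]mulrC.
Qed.

End DeviationBound.

End PerturbedPushSum.

Section StepSizes.
Context {R : realType}.

Lemma geometric_block_le (mu : R) e m b : 0 < mu < 1 ->
  \sum_(m <= s < b) mu ^+ (e + (b - s.+1)) <= mu ^+ e / (1 - mu).
Proof.
case/andP=> mu_gt0 mu_lt1.
rewrite -{1}(add0n m) big_addn.
have -> : \sum_(0 <= s < (b - m)%N) mu ^+ (e + (b - (s + m)%N.+1))
    = series (geometric (mu ^+ e) mu) (b - m)%N.
  rewrite /series /= big_nat_rev /= !big_nat; apply: eq_bigr => s /andP [_ sbm].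
  by rewrite -exprD; congr (_ ^+ (_ + _)); lia.
apply: geometric_le_lim => //; first exact/exprn_ge0/ltW.
by rewrite ger0_norm //; exact: ltW.
Qed.

Lemma uphalf_bounds t : (uphalf t <= t)%N /\ (t <= 2 * (t - uphalf t + 1))%N.
Proof.
have := odd_double_half t; rewrite uphalf_half -addnn.
by case: (odd t) => /=; move: (t./2) => k; lia.
Qed.

(* Splitting a discounted sum of non-increasing step sizes at uphalf t:
   the first half is damped by mu^(t/2), the second one by alpha(uphalf t). *)
Lemma discounted_sum_split (mu : R) (alpha : nat -> R) t : 0 < mu < 1 ->
  (forall s, 0 <= alpha s) -> (forall s, alpha s.+1 <= alpha s) ->
  \sum_(0 <= s < t.+1) mu ^+ (t - s) * alpha s
  <= (alpha 0%N * powR mu (t%:R / 2) + alpha (uphalf t)) / (1 - mu).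
Proof.
move=> mu01 alpha_ge0 /nonincreasing_seqP alpha_le.
have [mu_gt0 mu_lt1] := andP mu01.
have inv_ge0 : 0 <= (1 - mu)^-1 by rewrite invr_ge0 subr_ge0; exact: ltW.
set h := uphalf t; have [h_le_t t_le] := uphalf_bounds t; rewrite -/h in h_le_t t_le.
rewrite (@big_cat_nat _ _ _ h) //=; last exact: leqW.
rewrite mulrDl -mulrA; apply: lerD.
  apply: le_trans (_ : _ <= alpha 0%N * \sum_(0 <= s < h) mu ^+ (t - h + 1 + (h - s.+1))) _.
    rewrite mulr_sumr !big_nat; apply: ler_sum => s /andP [_ sh].
    have -> : (t - h + 1 + (h - s.+1) = t - s)%N by lia.
    by rewrite mulrC; apply: ler_wpM2r; [exact/exprn_ge0/ltW | exact: alpha_le].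
  apply: ler_wpM2l => //; apply: le_trans (geometric_block_le _ _ _ _ mu01) _.
  apply: ler_wpM2r => //; rewrite -powR_mulrn; last exact: ltW.
  apply: ger_powR; first by rewrite mu_gt0; exact: ltW.
  by rewrite ler_pdivrMr // -natrM ler_nat mulnC.
apply: le_trans (_ : _ <= alpha h * \sum_(h <= s < t.+1) mu ^+ (0 + (t.+1 - s.+1))) _.
  rewrite mulr_sumr !big_nat; apply: ler_sum => s /andP [hs _].
  by rewrite subSS mulrC; apply: ler_wpM2r; [exact/exprn_ge0/ltW | exact: alpha_le].
apply: ler_wpM2l => //; apply: le_trans (geometric_block_le _ _ _ _ mu01) _.
by rewrite expr0 mul1r.
Qed.

Lemma discounted_sum_scaled (mu c k : R) (alpha : nat -> R) t : 0 < mu < 1 ->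
  0 <= c -> 0 < k -> (forall s, 0 <= alpha s) -> (forall s, alpha s.+1 <= alpha s) ->
  c / k * \sum_(0 <= s < t.+1) mu ^+ (t - s) * alpha s
  <= c / (k * (1 - mu)) * (alpha 0%N * powR mu (t%:R / 2) + alpha (uphalf t)).
Proof.
move=> mu01 c_ge0 k_gt0 alpha_ge0 alpha_le; have [_ mu_lt1] := andP mu01.
set S := alpha 0%N * _ + _; have -> : c / (k * (1 - mu)) * S = c / k * (S / (1 - mu)).
  by field; rewrite !lt0r_neq0 ?subr_gt0.
apply: ler_wpM2l; first exact: divr_ge0 (ltW k_gt0).
exact: discounted_sum_split.
Qed.

End StepSizes.

(* In the heterogeneous algorithm the step alpha g_j is split between a
   part sent through the network and a part applied locally; in total
   each agent moves by at most alpha G. *)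
Lemma split_step_le {R : realType} {n d : nat} (c G : R) (b : 'I_n -> bool)
    (g : 'I_n -> 'rV[R]_d) :
  0 <= c -> (forall j, enorm (g j) <= G) ->
  sum_enorm (fun j => - ((c * (b j)%:R) *: g j))
    + sum_enorm (fun j => - ((c * (1 - (b j)%:R)) *: g j)) <= n%:R * G * c.
Proof.
move=> c_ge0 g_le; rewrite /sum_enorm -big_split /=.
have split_eq j : enorm (- ((c * (b j)%:R) *: g j))
    + enorm (- ((c * (1 - (b j)%:R)) *: g j)) = c * enorm (g j).
  rewrite !enormN !enormZ.
  by case: (b j); rewrite ?subrr ?subr0 ?mulr0 ?mulr1 normr0 mul0r ?add0r ?addr0 ger0_norm.
under eq_bigr do rewrite split_eq.
apply: le_trans (ler_sum _ (fun j _ => ler_wpM2l c_ge0 (g_le j))) _.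
by rewrite sumr_const card_ord mulr_natl mulrnAl mulrC.
Qed.
Theorem mainTheorem13 (R : realType) (n d L : nat)
  (E : nat -> rel 'I_n) (W : nat -> 'M[R]_n) (beta : R)
  (f : 'I_n -> 'rV[R]_d -> R) (sigma : 'I_n -> nat -> bool) (alpha : nat -> R)
  (x : nat -> 'I_n -> 'rV[R]_d) (y : nat -> 'I_n -> R)
  (z : nat -> 'I_n -> 'rV[R]_d) (g : nat -> 'I_n -> 'rV[R]_d)
  (G eta mu : R) :
  (0 < n)%N ->
  (* graphs with self-arcs *)
  (forall t i, E t i i) ->
  (* weights *)
  0 < beta ->
  (forall t i j, E t j i -> beta <= W t i j) ->
  (forall t i j, ~~ E t j i -> W t i j = 0) ->
  (forall t i, \sum_(k | E t i k) W t k i = 1) ->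
  (* uniform strong connectivity *)
  USC E L ->
  (* the algorithm *)
  (forall i, convex_fun (f i)) ->
  (forall t, 0 < alpha t) ->
  (forall t i, x t.+1 i =
     \sum_(j | E t j i) W t i j *:
         (x t j - (alpha t * (sigma j t)%:R) *: g t j)
     - (alpha t * (1 - (sigma i t)%:R)) *: g t i) ->
  (forall i, y 0%N i = 1) ->
  (forall t i, y t.+1 i = \sum_(j | E t j i) W t i j * y t j) ->
  (forall t i, z t i = (y t i)^-1 *: x t i) ->
  (forall t i, is_subgradient (f i) (z t i) (g t i)) ->
  (* bounded subgradients *)
  0 < G ->
  (forall t i, enorm (g t i) <= G) ->
  (* constants eta, mu *)
  0 < eta ->
  (forall t i, eta <= y t i) ->
  0 < mu < 1 ->
  (exists phi : nat -> 'I_n -> R,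
     (forall t i, 0 <= phi t i) /\ (forall t, \sum_i phi t i = 1) /\
     (forall i j t s, (s <= t)%N ->
        `| Phi_W W t.+1 s i j - phi t i | <= 4 * mu ^+ (t - s))) ->
  (forall t i,
     enorm (z t.+1 i - (n%:R)^-1 *: \sum_k x t k)
     <= 8 / eta * mu ^+ t * \sum_k enorm (x 0%N k)
        + 8 * n%:R * G / (eta * mu) * \sum_(0 <= s < t.+1) mu ^+ (t - s) * alpha s)
  /\
  ((forall t, 0 < alpha t) ->
   (forall t, alpha t.+1 <= alpha t) ->
   (fun N => \sum_(0 <= k < N) alpha k) @ \oo --> +oo ->
   cvg ((fun N => \sum_(0 <= k < N) alpha k ^+ 2) @ \oo) ->
   forall t i,
     enorm (z t.+1 i - (n%:R)^-1 *: \sum_k x t k)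
     <= 8 / eta * mu ^+ t * \sum_k enorm (x 0%N k)
        + 8 * n%:R * G / (eta * mu * (1 - mu))
          * (alpha 0%N * powR mu (t%:R / 2) + alpha (uphalf t))).
Proof.
move=> n_gt0 _ _ _ W_off W_col_arcs _ _ alpha_gt0 x_rec y_init y_rec z_def _ G_gt0 g_le
  eta_gt0 y_ge mu01 [phi [phi_ge0 [phi_sum1 Phi_close]]].
have [mu_gt0 mu_lt1] := andP mu01.
pose P t j := - ((alpha t * (sigma j t)%:R) *: g t j).
pose Q t i := - ((alpha t * (1 - (sigma i t)%:R)) *: g t i).
have W_col t j : \sum_i W t i j = 1.
  by rewrite -(W_col_arcs t j) (big_rmcond (E t j)) // => k /W_off.
have X_rec t i : x t.+1 i = mxact (W t) (fun j => x t j + P t j) i + Q t i.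
  by rewrite x_rec (big_rmcond (E t ^~ i)) // => j /W_off ->; rewrite scale0r.
have Y_rec t i : y t.+1 i = \sum_j W t i j * y t j.
  by rewrite y_rec (big_rmcond (E t ^~ i)) // => j /W_off ->; rewrite mul0r.
have pert_le s : sum_enorm (P s) + sum_enorm (Q s) <= n%:R * G * alpha s.
  exact: split_step_le (ltW (alpha_gt0 s)) (g_le s).
have first_bound t i : enorm (z t.+1 i - (n%:R)^-1 *: \sum_k x t k)
     <= 8 / eta * mu ^+ t * \sum_k enorm (x 0%N k)
        + 8 * n%:R * G / (eta * mu) * \sum_(0 <= s < t.+1) mu ^+ (t - s) * alpha s.
  have -> : 8 * n%:R * G / (eta * mu) * \sum_(0 <= s < t.+1) mu ^+ (t - s) * alpha s
      = 8 / (eta * mu) * \sum_(0 <= s < t.+1) mu ^+ (t - s) * (n%:R * G * alpha s).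
    by rewrite !mulr_sumr; apply: eq_bigr => s _; ring.
  rewrite z_def; apply: (normalized_deviation_le W_col X_rec y_init Y_rec t i (phi t) mu
    n_gt0 mu_gt0 (ltW mu_lt1) (phi_ge0 t) (phi_sum1 t) (fun j s => Phi_close i j t s)
    _ eta eta_gt0 (y_ge _ _) pert_le).
split=> // _ alpha_le _ _ t i; apply: le_trans (first_bound t i) _; apply: lerD => //.
apply: discounted_sum_scaled => //; [| exact: mulr_gt0 | by move=> s; exact: ltW].
by apply: mulr_ge0; [apply: mulr_ge0; rewrite ?ler0n | exact: ltW].
Qed.
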